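(* Let $\mathcal O_\ast:\mathrm{Agg}^{\rm forest}\to\mathrm{Set}$ be the trivial (constant one-point) functor. Then $k_!(\mathcal O_\ast)\cong\mathcal O_{\rm genus}$ as functors $\mathrm{Agg}^{\rm ctd}\to\mathrm{Set}$. Concretely, for each finite set $S$ the set of connected components of the comma category $(k\downarrow *_S)$ is in natural bijection with $\mathbb N_0$, via the loop number $b_1=|E|-|V|+1$ of the ghost graph of $\phi:X\to *_S$.
   Context: A graph is $(F,V,\partial,\imath)$ with finite flag set $F$, vertex set $V$, incidence $\partial:F\to V$ and involution $\imath$ (2-element orbits are edges, fixed points outer flags); an aggregate is a graph with $\imath=\mathrm{id}$, and $*_S$ is the one-vertex aggregate with flag set $S$. For a graph morphism between aggregates, given by a surjection on vertices, an injection on flags in the contravariant direction, and a fixed-point-free involution on the flags not in the image, the ghost graph is the source aggregate with this involution added (so its edges are the ''virtually contracted'' pairs). $\mathrm{Agg}^{\rm ctd}$ is the category of aggregates whose morphisms are generated by isomorphisms, virtual edge contractions ${}_s\circ_t$ (for outer flags $s,t$ at distinct vertices: merge $\partial s,\partial t$, delete $s,t$, ghost edge $\{s,t\}$) and virtual loop contractions $\circ_{st}$ (for distinct $s,t$ at one vertex: delete $s,t$); $\mathrm{Agg}^{\rm forest}$ is the subcategory generated by isomorphisms and virtual edge contractions, and $k:\mathrm{Agg}^{\rm forest}\to\mathrm{Agg}^{\rm ctd}$ is the inclusion. For a functor $\mathcal O:\mathrm{Agg}^{\rm forest}\to\mathrm{Set}$, $k_!(\mathcal O)$ is the pointwise left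 Kan extension: $k_!(\mathcal O)(Y)=\mathrm{colim}_{(X,\phi)\in(k\downarrow Y)}\mathcal O(X)$, where $(k\downarrow Y)$ has objects pairs $(X,\phi:X\to Y)$ with $\phi$ in $\mathrm{Agg}^{\rm ctd}$ and morphisms $\psi:X\to X'$ in $\mathrm{Agg}^{\rm forest}$ with $\phi'\psi=\phi$; morphisms of $\mathrm{Agg}^{\rm ctd}$ act by postcomposition. $\mathcal O_{\rm genus}(X)=\mathbb N_0^{V_X}$, with isomorphisms relabelling vertices, ${}_s\circ_t$ assigning $g(\partial s)+g(\partial t)$ to the merged vertex, and $\circ_{st}$ adding $1$ at $\partial s$ (other values unchanged). *)

From mathcomp Require Import all_boot.
From Stdlib Require Import Relations.Relation_Operators.
Set Implicit Arguments. Unset Strict Implicit. Unset Printing Implicit Defensive.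

(* An aggregate: a graph whose involution is the identity, i.e. a finite set
   of (outer) flags F, a finite set of vertices V and an incidence map. *)
Record agg := Agg { V : finType; F : finType; bd : F -> V }.

(* A graph morphism X -> Y between aggregates: a map on vertices,
   a (contravariant) map on flags, and the involution of the ghost graph on
   the flags of X (identity on the image of mf, fixed-point-free on the rest,
   for all morphisms in the categories below). *)
Record mor (X Y : agg) := Mor {
  mv : {ffun V X -> V Y};
  mf : {ffun F Y -> F X};
  mj : {ffun F X -> F X} }.

Definition compat X Y (m : mor X Y) := forall f : F Y, mv m (bd (mf m f)) = bd f.

Definition is_iso X Y (m : mor X Y) : Prop :=
  bijective (mv m) /\ bijective (mf m) /\ (forall x, mj m x = x) /\ compat m.

Definition deletes_st X Y (s t : F X) (m : mor X Y) : Prop :=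
  s != t /\ injective (mf m) /\
  (forall x, x \in codom (mf m) = (x != s) && (x != t)) /\
  mj m s = t /\ mj m t = s /\ (forall x, x != s -> x != t -> mj m x = x).

(* virtual edge contraction s o_t (up to relabelling of the target):
   merges bd s and bd t (distinct vertices) and nothing else *)
Definition is_econ X Y (s t : F X) (m : mor X Y) : Prop :=
  bd s != bd t /\ deletes_st s t m /\ compat m /\
  (forall w : V Y, exists v, mv m v = w) /\
  (forall u w : V X, mv m u = mv m w <->
     (u = w \/ (u = bd s /\ w = bd t) \/ (u = bd t /\ w = bd s))).

(* virtual loop contraction o_st (up to relabelling of the target) *)
Definition is_lcon X Y (s t : F X) (m : mor X Y) : Prop :=
  bd s = bd t /\ deletes_st s t m /\ compat m /\ bijective (mv m).

Definition comp X Y Z (m1 : mor X Y) (m2 : mor Y Z) : mor X Z :=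
  Mor [ffun v => mv m2 (mv m1 v)]
      [ffun z => mf m1 (mf m2 z)]
      [ffun x => if [pick y | mf m1 y == x] is Some y then mf m1 (mj m2 y)
                 else mj m1 x].

Inductive ctd : forall X Y, mor X Y -> Prop :=
| ctd_iso X Y (m : mor X Y) : is_iso m -> ctd m
| ctd_comp_iso X Y Z (m1 : mor X Y) (m2 : mor Y Z) :
    ctd m1 -> is_iso m2 -> ctd (comp m1 m2)
| ctd_comp_econ X Y Z (m1 : mor X Y) (m2 : mor Y Z) s t :
    ctd m1 -> is_econ s t m2 -> ctd (comp m1 m2)
| ctd_comp_lcon X Y Z (m1 : mor X Y) (m2 : mor Y Z) s t :
    ctd m1 -> is_lcon s t m2 -> ctd (comp m1 m2).

Inductive forest : forall X Y, mor X Y -> Prop :=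
| forest_iso X Y (m : mor X Y) : is_iso m -> forest m
| forest_comp_iso X Y Z (m1 : mor X Y) (m2 : mor Y Z) :
    forest m1 -> is_iso m2 -> forest (comp m1 m2)
| forest_comp_econ X Y Z (m1 : mor X Y) (m2 : mor Y Z) s t :
    forest m1 -> is_econ s t m2 -> forest (comp m1 m2).

Record cobj (Y : agg) := CObj { cX : agg; cphi : mor cX Y; cphiP : ctd cphi }.

Definition cstep Y (a b : cobj Y) : Prop :=
  exists psi : mor (cX a) (cX b), forest psi /\ comp psi (cphi b) = cphi a.

(* same connected component of (k | Y); the colimit of the constant
   one-point functor over (k | Y) is the set of these components *)
Definition cconn Y : cobj Y -> cobj Y -> Prop := clos_refl_sym_trans _ (@cstep Y).

(* action of k_!(O_* ) on the generating ctd morphisms: postcomposition *)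
Definition post_iso Y Y' (a : cobj Y) (psi : mor Y Y') (h : is_iso psi) : cobj Y' :=
  CObj (ctd_comp_iso (cphiP a) h).
Definition post_econ Y Y' (a : cobj Y) (psi : mor Y Y') s t (h : is_econ s t psi)
  : cobj Y' := CObj (ctd_comp_econ (cphiP a) h).
Definition post_lcon Y Y' (a : cobj Y) (psi : mor Y Y') s t (h : is_lcon s t psi)
  : cobj Y' := CObj (ctd_comp_lcon (cphiP a) h).

Definition genus_val (Y : agg) := {ffun V Y -> nat}.

(* O_genus on morphisms: relabel / sum the genera over each fibre
   (isomorphisms and edge contractions), plus 1 at the vertex of the
   contracted loop for loop contractions. *)
Definition gsum Y Y' (psi : mor Y Y') (g : genus_val Y) : genus_val Y' :=
  [ffun w => \sum_(v | mv psi v == w) g v].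
Definition gloop Y Y' (psi : mor Y Y') (s : F Y) (g : genus_val Y) : genus_val Y' :=
  [ffun w => \sum_(v | mv psi v == w) g v + (w == mv psi (bd s))].

(* loop number b_1 = |E| - |V| + 1 of the part of the ghost graph of
   phi : X -> Y lying over the vertex w of Y (ghost edges = pairs of flags
   exchanged by the ghost involution). *)
Definition loopnum Y (a : cobj Y) : genus_val Y :=
  [ffun w => (#|[set x : F (cX a) | (mj (cphi a) x != x)
                                  && (mv (cphi a) (bd x) == w)]| %/ 2 + 1)
             - #|[set v : V (cX a) | mv (cphi a) v == w]|].

(* The loop number b_1 = |E| - |V| + 1 of the ghost graph of phi : X -> Y,
   taken over each vertex of Y, is additive under composition, since the
   fibres and ghost edges of a composite are unions of those of its factors.
   Isomorphisms and edge contractions add no loop and a loop contraction adds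
   exactly one, which gives invariance along (k | Y) and naturality.
   Conversely, an edge contraction following phi can be performed first in X,
   as a forest morphism, so every object of (k | Y) is connected to one whose
   vertex map is injective. Such a morphism is an isomorphism followed by loop
   contractions; peeling off one loop at a time shows that two of them with
   the same loop numbers are connected, and that every loop number occurs. *)

From mathcomp Require Import all_boot zify.
From Stdlib Require Import Relations.Relation_Operators ProofIrrelevance.
(* Imported last, so that its [comp] shadows ssrfun's function composition. *)
Set Implicit Arguments. Unset Strict Implicit. Unset Printing Implicit Defensive.

Lemma bij_preimage (T T' : Type) (f : T -> T') : bijective f -> forall y, exists x, f x = y.
Proof. by case=> g _ gK y; exists (g y); rewrite gK. Qed.

Lemma inj_surj_bij (T T' : finType) (f : T -> T') :
  injective f -> (forall y, exists x, f x = y) -> bijective f.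
Proof.
move=> inj surj; apply: inj_card_bij => //; rewrite -(card_codom inj).
by apply/subset_leq_card/subsetP => y _; have [x <-] := surj y; rewrite codom_f.
Qed.

Lemma sum_indicator1 (T : finType) (w : T) : \sum_u (u == w : nat) = 1.
Proof. by rewrite (bigD1 w) //= eqxx big1 // => u /negbTE ->. Qed.

Lemma even_card_fixfree_invol (T : finType) (f : T -> T) (A : {set T}) :
  involutive f -> (forall x, (f x \in A) = (x \in A)) -> {in A, forall x, f x != x} ->
  ~~ odd #|A|.
Proof.
move=> fK fA fixfree; rewrite -(@fcard_order_set _ f (inv_inj fK) 2 A) ?oddM ?andbF //.
- apply/subsetP => x /fixfree fx; rewrite inE; apply/eqP.
  by apply: (@order_cycle _ f [:: x; f x]); rewrite /= ?fK ?inE ?eqxx 1?eq_sym ?fx.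
- by move=> x y /eqP <-; rewrite fA.
Qed.

Lemma half_sum_even (I : finType) (P : pred I) (e : I -> nat) :
  (forall i, ~~ odd (e i)) -> (\sum_(i | P i) e i) %/ 2 = \sum_(i | P i) e i %/ 2.
Proof.
move=> e_even; rewrite (eq_bigr (fun i => 2 * (e i %/ 2))) => [|i _]; last first.
  by rewrite mulnC divnK // dvdn2.
by rewrite -big_distrr mulKn.
Qed.

Section Composition.
Variables (X Y Z : agg) (m1 : mor X Y) (m2 : mor Y Z).

Lemma comp_mv v : mv (comp m1 m2) v = mv m2 (mv m1 v).
Proof. by rewrite ffunE. Qed.

Lemma comp_mf z : mf (comp m1 m2) z = mf m1 (mf m2 z).
Proof. by rewrite ffunE. Qed.

Lemma comp_mj_mf y : injective (mf m1) -> mj (comp m1 m2) (mf m1 y) = mf m1 (mj m2 y).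
Proof.
move=> inj1; rewrite ffunE; case: pickP => [y' /eqP/inj1 -> // | /(_ y)].
by rewrite eqxx.
Qed.

Lemma comp_mj_notin x : x \notin codom (mf m1) -> mj (comp m1 m2) x = mj m1 x.
Proof.
move=> x_out; rewrite ffunE; case: pickP => [y /eqP y_x | //].
by rewrite -y_x codom_f in x_out.
Qed.

Lemma codom_comp_mf y : injective (mf m1) ->
  (mf m1 y \in codom (mf (comp m1 m2))) = (y \in codom (mf m2)).
Proof.
move=> inj1; apply/codomP/codomP => [[z] | [z ->]]; last by exists z; rewrite comp_mf.
by rewrite comp_mf => /inj1 ->; exists z.
Qed.

Lemma codom_comp_notin x : x \notin codom (mf m1) -> x \notin codom (mf (comp m1 m2)).
Proof. by apply: contra => /codomP [z ->]; rewrite comp_mf codom_f. Qed.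

Lemma comp_mv_inj :
  injective (mv m1) -> injective (mv m2) -> injective (mv (comp m1 m2)).
Proof. by move=> inj1 inj2 u v; rewrite !comp_mv => /inj2/inj1. Qed.

End Composition.

Lemma mor_ext X Y (m m' : mor X Y) : mv m =1 mv m' -> mf m =1 mf m' -> mj m =1 mj m' -> m = m'.
Proof. by case: m m' => [a b c] [a' b' c'] /= /ffunP-> /ffunP-> /ffunP->. Qed.

Lemma comp_assoc W X Y Z (m1 : mor W X) (m2 : mor X Y) (m3 : mor Y Z) :
  injective (mf m1) -> injective (mf m2) -> comp m1 (comp m2 m3) = comp (comp m1 m2) m3.
Proof.
move=> inj1 inj2; have inj12 : injective (mf (comp m1 m2)).
  by move=> a b; rewrite !comp_mf => /inj1/inj2.
apply: mor_ext => x; rewrite ?comp_mv ?comp_mf //.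
have [/codomP [y ->] | x_out] := boolP (x \in codom (mf m1)); last first.
  by rewrite !comp_mj_notin ?codom_comp_notin.
rewrite comp_mj_mf //; have [/codomP [z ->] | y_out] := boolP (y \in codom (mf m2)).
  by rewrite (comp_mj_mf m3 z inj2) -(comp_mf m1 m2 z) comp_mj_mf // comp_mf.
by rewrite comp_mj_notin // comp_mj_notin ?codom_comp_mf // comp_mj_mf.
Qed.

Definition idm Y : mor Y Y := Mor [ffun v => v] [ffun f => f] [ffun f => f].

Lemma idm_iso Y : is_iso (idm Y).
Proof.
do 2![split; first by exists id => v; rewrite ffunE].
by split=> [x|f]; rewrite !ffunE.
Qed.

Lemma comp1m X Y (m : mor X Y) : comp (idm X) m = m.
Proof.
have inj1 : injective (mf (idm X)) by move=> a b; rewrite !ffunE.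
apply: mor_ext => x; rewrite ?comp_mv ?comp_mf ?[mv (idm X) _]ffunE ?[mf (idm X) _]ffunE //.
have idx : mf (idm X) x = x by rewrite ffunE.
by rewrite -[in LHS]idx comp_mj_mf // ffunE.
Qed.

Lemma compm1 X Y (m : mor X Y) : injective (mf m) ->
  (forall x, (mj m x == x) = (x \in codom (mf m))) -> comp m (idm Y) = m.
Proof.
move=> inj fixE; apply: mor_ext => x.
- by rewrite comp_mv ffunE.
- by rewrite comp_mf ffunE.
have [/codomP [y ->] | x_out] := boolP (x \in codom (mf m)); last by rewrite comp_mj_notin.
by rewrite comp_mj_mf // ffunE; apply/esym/eqP; rewrite fixE codom_f.
Qed.

Definition ghost_flags X Y (m : mor X Y) (w : V Y) :=
  #|[set x : F X | (mj m x != x) && (mv m (bd x) == w)]|.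

Definition fibre_card X Y (m : mor X Y) (w : V Y) := #|[set v : V X | mv m v == w]|.

Definition loop_number X Y (m : mor X Y) : {ffun V Y -> nat} :=
  [ffun w => (ghost_flags m w %/ 2 + 1) - fibre_card m w].

Lemma loopnumE Y (a : cobj Y) : loopnum a = loop_number (cphi a).
Proof. by []. Qed.

(* The last field says that b_1 >= 0 over each vertex, so that the truncated
   subtraction in [loop_number] is exact; this is what makes loop numbers
   additive under composition. *)
Record admissible X Y (m : mor X Y) : Prop := Admissible {
  adm_mf_inj : injective (mf m);
  adm_compat : compat m;
  adm_mjK : involutive (mj m);
  adm_mj_fixE : forall x, (mj m x == x) = (x \in codom (mf m));
  adm_mj_fibre : forall x, mv m (bd (mj m x)) = mv m (bd x);
  adm_mv_surj : forall w, exists v, mv m v = w;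
  adm_fibre_card : forall w, fibre_card m w <= ghost_flags m w %/ 2 + 1 }.

Lemma ghost_flags_even X Y (m : mor X Y) w : admissible m -> ~~ odd (ghost_flags m w).
Proof.
case=> _ _ mjK _ mj_fibre _ _; apply: (even_card_fixfree_invol mjK) => [x|x].
  by rewrite !inE mj_fibre mjK eq_sym.
by rewrite inE => /andP [].
Qed.

Lemma fibre_card_comp X Y Z (m1 : mor X Y) (m2 : mor Y Z) w :
  fibre_card (comp m1 m2) w = \sum_(u | mv m2 u == w) fibre_card m1 u.
Proof.
rewrite /fibre_card -sum1_card.
rewrite (partition_big (mv m1) (fun u => mv m2 u == w)) => [|v]; last by rewrite inE comp_mv.
apply: eq_bigr => u /eqP uw; rewrite -sum1_card; apply: eq_bigl => v; rewrite !inE comp_mv.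
by apply/andP/idP => [[_ ->] // | /eqP vu]; rewrite vu uw.
Qed.

Lemma ghost_flags_comp X Y Z (m1 : mor X Y) (m2 : mor Y Z) w : admissible m1 ->
  ghost_flags (comp m1 m2) w = ghost_flags m2 w + \sum_(u | mv m2 u == w) ghost_flags m1 u.
Proof.
case=> inj1 compat1 _ fixE1 _ _ _.
set A2 := [set y | (mj m2 y != y) && (mv m2 (bd y) == w)].
set B := [set x | (mj m1 x != x) && (mv m2 (mv m1 (bd x)) == w)].
have split_ghost : [set x | (mj (comp m1 m2) x != x) && (mv (comp m1 m2) (bd x) == w)]
    = (mf m1 @: A2) :|: B.
  apply/setP => x; rewrite !inE comp_mv.
  have [/codomP [y ->] | x_out] := boolP (x \in codom (mf m1)).
    rewrite comp_mj_mf // (inj_eq inj1) compat1 mem_imset ?inE //.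
    by rewrite fixE1 codom_f orbF.
  rewrite comp_mj_notin //; case: imsetP => [[y _ xy] | //].
  by rewrite xy codom_f in x_out.
rewrite /ghost_flags split_ghost cardsU card_imset //.
have -> : mf m1 @: A2 :&: B = set0.
  apply/setP => x; rewrite !inE; apply/andP => [[/imsetP [y _ ->]]].
  by rewrite fixE1 codom_f.
rewrite cards0 subn0; congr (_ + _); rewrite -sum1_card.
rewrite (partition_big (fun x => mv m1 (bd x)) (fun u => mv m2 u == w)) => [|x]; last first.
  by rewrite inE => /andP [].
apply: eq_bigr => u /eqP uw; rewrite -sum1_card; apply: eq_bigl => x.
rewrite !inE; apply/andP/idP => [[/andP [-> _] ->] // | /andP [-> /eqP xu]].
by rewrite xu uw !eqxx.
Qed.

Section AdmissibleComp.
Variables (X Y Z : agg) (m1 : mor X Y) (m2 : mor Y Z).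
Hypotheses (adm1 : admissible m1) (adm2 : admissible m2).

Let half_ghost_flags_comp w : ghost_flags (comp m1 m2) w %/ 2 =
  ghost_flags m2 w %/ 2 + \sum_(u | mv m2 u == w) ghost_flags m1 u %/ 2.
Proof.
rewrite ghost_flags_comp // divnDl ?dvdn2 ?ghost_flags_even // half_sum_even // => u.
exact: ghost_flags_even.
Qed.

Let fibre_card_sum1 w : fibre_card m2 w = \sum_(u | mv m2 u == w) 1.
Proof. by rewrite /fibre_card -sum1_card; apply: eq_bigl => u; rewrite inE. Qed.

Let fibre_card_sum_le w : \sum_(u | mv m2 u == w) fibre_card m1 u <=
  \sum_(u | mv m2 u == w) ghost_flags m1 u %/ 2 + \sum_(u | mv m2 u == w) 1.
Proof. by rewrite -big_split; apply: leq_sum => u _; apply: adm_fibre_card. Qed.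

Lemma fibre_card_comp_le w : fibre_card (comp m1 m2) w <= ghost_flags (comp m1 m2) w %/ 2 + 1.
Proof.
have := adm_fibre_card adm2 w; have := fibre_card_sum_le w.
rewrite fibre_card_comp half_ghost_flags_comp fibre_card_sum1; lia.
Qed.

Lemma loop_number_comp w :
  loop_number (comp m1 m2) w = loop_number m2 w + \sum_(u | mv m2 u == w) loop_number m1 u.
Proof.
have := adm_fibre_card adm2 w; have := fibre_card_sum_le w.
rewrite (eq_bigr _ (fun u _ => ffunE _ u)) sumnB => [|u _]; last exact: adm_fibre_card.
rewrite big_split !ffunE fibre_card_comp half_ghost_flags_comp fibre_card_sum1 /=; lia.
Qed.

Lemma admissible_comp : admissible (comp m1 m2).
Proof.
have [inj1 compat1 mjK1 fixE1 fibre1 surj1 _] := adm1.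
have [inj2 compat2 mjK2 fixE2 fibre2 surj2 _] := adm2.
split=> [a b | z | x | x | x | w | w]; last exact: fibre_card_comp_le.
- by rewrite !comp_mf => /inj1/inj2.
- by rewrite comp_mv comp_mf compat1 compat2.
- have [/codomP [y ->] | x_out] := boolP (x \in codom (mf m1)).
    by rewrite !comp_mj_mf // mjK2.
  have x'_out : mj m1 x \notin codom (mf m1) by rewrite -fixE1 mjK1 eq_sym fixE1.
  by rewrite !comp_mj_notin // mjK1.
- have [/codomP [y ->] | x_out] := boolP (x \in codom (mf m1)).
    by rewrite comp_mj_mf // (inj_eq inj1) fixE2 codom_comp_mf.
  by rewrite comp_mj_notin // (negbTE (codom_comp_notin m2 x_out)) fixE1 (negbTE x_out).
- have [/codomP [y ->] | x_out] := boolP (x \in codom (mf m1)).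
    by rewrite comp_mj_mf // !comp_mv !compat1 fibre2.
  by rewrite comp_mj_notin // !comp_mv fibre1.
- have [u <-] := surj2 w; have [v <-] := surj1 u.
  by exists v; rewrite comp_mv.
Qed.

Lemma loop_number_comp0 : loop_number m1 = [ffun=> 0] ->
  loop_number (comp m1 m2) = loop_number m2.
Proof.
move=> L1; apply/ffunP => w; rewrite loop_number_comp L1 big1 ?addn0 // => u _.
by rewrite ffunE.
Qed.

End AdmissibleComp.

Lemma fibre_card_inj X Y (m : mor X Y) v : injective (mv m) -> fibre_card m (mv m v) = 1.
Proof. by move=> inj; rewrite -(cards1 v); apply: eq_card => u; rewrite !inE (inj_eq inj). Qed.

Lemma fibre_card_le1 X Y (m : mor X Y) w : injective (mv m) -> fibre_card m w <= 1.
Proof. by move=> inj; apply/card_le1_eqP => u v; rewrite !inE => /eqP <- /eqP/inj. Qed.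

Section DeleteTwoFlags.
Variables (X Y : agg) (m : mor X Y) (s t : F X).
Hypotheses (del : deletes_st s t m) (st_fibre : mv m (bd s) = mv m (bd t)).

Lemma mj_moved_st x : (mj m x != x) = (x == s) || (x == t).
Proof.
have [st [_ [_ [mjs [mjt mj_other]]]]] := del.
have [-> | xs] := eqVneq x s; first by rewrite mjs eq_sym.
have [-> | xt] := eqVneq x t; first by rewrite mjt.
by rewrite mj_other ?eqxx.
Qed.

Lemma ghost_flags_del w : ghost_flags m w = if w == mv m (bd s) then 2 else 0.
Proof.
have st : s != t by case: del.
rewrite /ghost_flags; case: eqP => [-> | /eqP ws].
  rewrite -[2]/(true.+1) -st -(cards2 s t); apply: eq_card => x.
  rewrite !inE mj_moved_st.
  by case: eqP => [-> | _]; case: eqP => [-> | _] //=; rewrite ?st_fibre eqxx.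
apply/eqP; rewrite cards_eq0; apply/eqP/setP => x; rewrite !inE mj_moved_st.
by case: eqP => [-> | _]; case: eqP => [-> | _] //=; rewrite -?st_fibre eq_sym (negbTE ws).
Qed.

Lemma admissible_del : compat m -> (forall w, exists v, mv m v = w) ->
  (forall w, fibre_card m w <= ghost_flags m w %/ 2 + 1) -> admissible m.
Proof.
have [st [inj [codomE [mjs [mjt mj_other]]]]] := del.
split=> // [x | x | x].
- have [-> | xs] := eqVneq x s; first by rewrite mjs mjt.
  have [-> | xt] := eqVneq x t; first by rewrite mjt mjs.
  by rewrite !mj_other.
- by rewrite codomE -negb_or -mj_moved_st negbK.
- have [-> | xs] := eqVneq x s; first by rewrite mjs st_fibre.
  have [-> | xt] := eqVneq x t; first by rewrite mjt st_fibre.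
  by rewrite mj_other.
Qed.

End DeleteTwoFlags.

Lemma ghost_flags_fixed X Y (m : mor X Y) w : (forall x, mj m x = x) -> ghost_flags m w = 0.
Proof.
by move=> fixed; apply/eqP; rewrite cards_eq0; apply/eqP/setP => x; rewrite !inE fixed eqxx.
Qed.

Lemma admissible_iso X Y (m : mor X Y) : is_iso m -> admissible m.
Proof.
case=> bij_v [bij_f [mj_id compat_m]].
split=> // [|x|x|x||w]; rewrite ?mj_id //.
- exact: bij_inj.
- by rewrite eqxx; have [y <-] := bij_preimage bij_f x; rewrite codom_f.
- exact: bij_preimage.
- by rewrite ghost_flags_fixed // fibre_card_le1 //; apply: bij_inj.
Qed.

Lemma loop_number_iso X Y (m : mor X Y) : is_iso m -> loop_number m = [ffun=> 0].
Proof.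
case=> bij_v [_ [mj_id _]]; apply/ffunP => w; have [v <-] := bij_preimage bij_v w.
by rewrite !ffunE ghost_flags_fixed // fibre_card_inj //; apply: bij_inj.
Qed.

Lemma econ_st_fibre X Y (m : mor X Y) s t : is_econ s t m -> mv m (bd s) = mv m (bd t).
Proof. by case=> _ [_ [_ [_ merge]]]; apply/merge; right; left. Qed.

Lemma fibre_card_econ X Y (m : mor X Y) s t w : is_econ s t m ->
  fibre_card m w = if w == mv m (bd s) then 2 else 1.
Proof.
move=> econ; have st_fibre := econ_st_fibre econ.
case: econ => st_bd [_ [_ [surj merge]]]; rewrite /fibre_card.
case: eqP => [-> | /eqP ws].
  rewrite -[2]/(true.+1) -st_bd -(cards2 (bd s) (bd t)); apply: eq_card => u; rewrite !inE.
  by apply/eqP/orP => [/merge [-> | [[-> _] | [-> _]]] | [/eqP -> | /eqP ->]]; auto.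
have [v vw] := surj w; rewrite -(cards1 v); apply: eq_card => u; rewrite !inE -vw.
apply/eqP/eqP => [/merge [// | [[_ vt] | [_ vs]]] | -> //]; case/eqP: ws.
  by rewrite -vw vt st_fibre.
by rewrite -vw vs.
Qed.

Lemma admissible_econ X Y (m : mor X Y) s t : is_econ s t m -> admissible m.
Proof.
move=> econ; have st_fibre := econ_st_fibre econ.
have [_ [del [compat_m [surj _]]]] := econ.
apply: (admissible_del del) => // w.
by rewrite (fibre_card_econ _ econ) (ghost_flags_del del st_fibre); case: ifP.
Qed.

Lemma loop_number_econ X Y (m : mor X Y) s t : is_econ s t m -> loop_number m = [ffun=> 0].
Proof.
move=> econ; have [_ [del _]] := econ.
apply/ffunP => w; rewrite !ffunE (fibre_card_econ _ econ).
by rewrite (ghost_flags_del del (econ_st_fibre econ)); case: ifP.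
Qed.

Lemma admissible_lcon X Y (m : mor X Y) s t : is_lcon s t m -> admissible m.
Proof.
case=> st_bd [del [compat_m bij_v]]; have surj := bij_preimage bij_v.
apply: (admissible_del del) => [|//|//|w]; first by rewrite st_bd.
by rewrite (leq_trans (fibre_card_le1 _ (bij_inj bij_v))) ?leq_addl.
Qed.

Lemma loop_number_lcon X Y (m : mor X Y) s t : is_lcon s t m ->
  loop_number m = [ffun w => (w == mv m (bd s)) : nat].
Proof.
case=> st_bd [del [_ bij_v]]; apply/ffunP => w; have [v <-] := bij_preimage bij_v w.
rewrite !ffunE (ghost_flags_del del) ?st_bd // fibre_card_inj; last exact: bij_inj.
by case: ifP.
Qed.

Lemma ctd_admissible X Y (m : mor X Y) : ctd m -> admissible m.
Proof.
elim=> {X Y m} [X Y m /admissible_iso //| X Y Z m1 m2 _ adm1 /admissible_iso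
  | X Y Z m1 m2 s t _ adm1 /admissible_econ | X Y Z m1 m2 s t _ adm1 /admissible_lcon].
all: exact: admissible_comp.
Qed.

Lemma forest_ctd X Y (m : mor X Y) : forest m -> ctd m.
Proof.
elim=> {X Y m} [X Y m /ctd_iso // | X Y Z m1 m2 _ ctd1 /(ctd_comp_iso ctd1) //
  | X Y Z m1 m2 s t _ ctd1 /(ctd_comp_econ ctd1) //].
Qed.

Lemma loop_number_forest X Y (m : mor X Y) : forest m -> loop_number m = [ffun=> 0].
Proof.
elim=> {X Y m} [X Y m /loop_number_iso // | X Y Z m1 m2 forest1 L1 iso2
  | X Y Z m1 m2 s t forest1 L1 econ2]; have adm1 := ctd_admissible (forest_ctd forest1).
  by rewrite loop_number_comp0 ?(loop_number_iso iso2) //; apply: admissible_iso.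
by rewrite loop_number_comp0 ?(loop_number_econ econ2) //; apply: admissible_econ econ2.
Qed.

Lemma loopnum_cstep Y (a b : cobj Y) : cstep a b -> loopnum a = loopnum b.
Proof.
rewrite !loopnumE => -[psi [forest_psi <-]].
have adm_psi := ctd_admissible (forest_ctd forest_psi); have adm_b := ctd_admissible (cphiP b).
by rewrite loop_number_comp0 // loop_number_forest.
Qed.

Lemma loopnum_cconn Y (a b : cobj Y) : cconn a b -> loopnum a = loopnum b.
Proof. by elim=> [a' b' /loopnum_cstep | | a' b' _ -> | a' b' c' _ -> _ ->]. Qed.

Lemma loopnum_post Y Y' (psi : mor Y Y') (a : cobj Y) (p : ctd (comp (cphi a) psi)) :
  admissible psi -> loopnum (CObj p) = [ffun w => loop_number psi w + gsum psi (loopnum a) w].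
Proof.
move=> adm_psi; have adm_a := ctd_admissible (cphiP a).
by apply/ffunP => w; rewrite !loopnumE /= loop_number_comp // !ffunE.
Qed.

Lemma cstep_post Y Y' (psi : mor Y Y') (a b : cobj Y)
    (pa : ctd (comp (cphi a) psi)) (pb : ctd (comp (cphi b) psi)) :
  cstep a b -> cstep (CObj pa) (CObj pb).
Proof.
case=> chi [forest_chi chi_b]; exists chi; split => //=.
rewrite comp_assoc ?chi_b //; first exact: adm_mf_inj (ctd_admissible (forest_ctd forest_chi)).
exact: adm_mf_inj (ctd_admissible (cphiP b)).
Qed.

Lemma cconn_post Y Y' (psi : mor Y Y') (post : forall a : cobj Y, ctd (comp (cphi a) psi))
  (a b : cobj Y) : cconn a b -> cconn (CObj (post a)) (CObj (post b)).
Proof.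
elim=> {a b} [a b ab | a | a b _ ba | a b c _ ab _ bc].
- exact/rst_step/cstep_post.
- exact: rst_refl.
- exact: rst_sym.
- exact: rst_trans ab bc.
Qed.

Lemma cconn_sym Y (a b : cobj Y) : cconn a b -> cconn b a.
Proof. exact: rst_sym. Qed.

Lemma cconn_trans Y (a b c : cobj Y) : cconn a b -> cconn b c -> cconn a c.
Proof. exact: rst_trans. Qed.

Lemma cconn_eq Y X (m m' : mor X Y) (p : ctd m) (p' : ctd m') : m = m' -> cconn (CObj p) (CObj p').
Proof. by move=> eq_m; subst m'; rewrite (proof_irrelevance _ p p'); apply: rst_refl. Qed.

(* [loop_agg Y w] is [Y] with two new flags [None] and [Some None] at [w];
   [loop_con Y w] is the loop contraction deleting them. *)
Definition loop_agg (Y : agg) (w : V Y) : agg :=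
  @Agg (V Y) (option (option (F Y)))
    (fun o => if o is Some (Some y) then bd y else w).

Definition loop_con (Y : agg) (w : V Y) : mor (loop_agg w) Y :=
  @Mor (loop_agg w) Y [ffun v => v] [ffun y => Some (Some y)]
    [ffun o => match o with None => Some None | Some None => None | _ => o end].

Lemma loop_con_lcon (Y : agg) (w : V Y) : is_lcon (None : F (loop_agg w)) (Some None) (loop_con w).
Proof.
split=> //; split; last by split=> [y|]; rewrite ?ffunE //; exists id => v; rewrite ffunE.
split=> //; split; first by move=> y y'; rewrite !ffunE => -[].
split; first by case=> [[y|]|] /=; apply/codomP; [exists y | case=> y | case=> y]; rewrite ffunE.
by rewrite !ffunE; do 2!split=> //; case=> [[y|]|] // _ _; rewrite ffunE.
Qed.

Section PeelLoop.
Variables (X Y : agg) (m : mor X Y) (s : F X) (w : V Y).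
Hypotheses (adm_m : admissible m) (inj_m : injective (mv m)).
Hypotheses (s_moved : mj m s != s) (s_w : mv m (bd s) = w).

Let mjK := adm_mjK adm_m.

(* [peel] turns the ghost edge {s, mj m s} of [m] back into two outer flags
   at [w], so that [m] is [peel] followed by the loop contraction [loop_con w]. *)
Definition peel : mor X (loop_agg w) :=
  @Mor X (loop_agg w) [ffun v => mv m v]
    [ffun o => match o with None => s | Some None => mj m s | Some (Some y) => mf m y end]
    [ffun x => if (x == s) || (x == mj m s) then x else mj m x].

Lemma peel_mjE x : mj peel x = if (x == s) || (x == mj m s) then x else mj m x.
Proof. by rewrite ffunE. Qed.

Lemma peel_mv_inj : injective (mv peel).
Proof. by move=> u v; rewrite !ffunE => /inj_m. Qed.

Let s_out : s \notin codom (mf m).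
Proof. by rewrite -(adm_mj_fixE adm_m). Qed.

Let mjs_out : mj m s \notin codom (mf m).
Proof. by rewrite -(adm_mj_fixE adm_m) mjK eq_sym. Qed.

Lemma peel_mf_inj : injective (mf peel).
Proof.
have inj := adm_mf_inj adm_m.
case=> [[y|]|] [[y'|]|]; rewrite !ffunE // => eq_y; first by rewrite (inj _ _ eq_y).
- by move: mjs_out; rewrite -eq_y codom_f.
- by move: s_out; rewrite -eq_y codom_f.
- by move: mjs_out; rewrite eq_y codom_f.
- by move: s_moved; rewrite eq_y eqxx.
- by move: s_out; rewrite eq_y codom_f.
- by move: s_moved; rewrite -eq_y eqxx.
Qed.

Lemma peel_comp : comp peel (loop_con w) = m.
Proof.
have inj := peel_mf_inj.
apply: mor_ext => x; first by rewrite comp_mv !ffunE.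
  by rewrite comp_mf !ffunE.
have [-> | xs] := eqVneq x s.
  have -> : s = mf peel None by rewrite ffunE.
  by rewrite comp_mj_mf // !ffunE.
have [-> | xt] := eqVneq x (mj m s).
  have -> : mj m s = mf peel (Some None) by rewrite ffunE.
  by rewrite comp_mj_mf // !ffunE mjK.
have [/codomP [y ->] | x_out] := boolP (x \in codom (mf m)).
  have -> : mf m y = mf peel (Some (Some y)) by rewrite ffunE.
  by rewrite comp_mj_mf // !ffunE; apply/esym/eqP; rewrite (adm_mj_fixE adm_m) codom_f.
rewrite comp_mj_notin; first by rewrite peel_mjE (negbTE xs) (negbTE xt).
apply/codomP => -[[[y|]|]]; rewrite ffunE => x_y.
- by rewrite x_y codom_f in x_out.
- by rewrite x_y eqxx in xt.
- by rewrite x_y eqxx in xs.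
Qed.

Lemma peel_admissible : admissible peel.
Proof.
have [_ compat_m _ fixE fibre surj _] := adm_m.
split=> [||x|x|x|u|u]; first exact: peel_mf_inj.
- by case=> [[y|]|]; rewrite !ffunE /= ?fibre.
- rewrite !peel_mjE; have [-> | xs] := eqVneq x s; first by rewrite eqxx.
  have [-> | xt] := eqVneq x (mj m s); first by rewrite eqxx orbT.
  have -> : (mj m x == s) = false by apply/negbTE; apply: contra xt => /eqP <-; rewrite mjK.
  by rewrite (can_eq mjK) (negbTE xs) /= mjK.
- rewrite peel_mjE; have [-> | xs] := eqVneq x s.
    by rewrite eqxx; apply/esym/codomP; exists None; rewrite ffunE.
  have [-> | xt] := eqVneq x (mj m s).
    by rewrite eqxx; apply/esym/codomP; exists (Some None); rewrite ffunE.
  rewrite fixE; apply/codomP/codomP => -[o x_o]; first by exists (Some (Some o)); rewrite ffunE.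
  move: x_o; case: o => [[y|]|]; rewrite ffunE => x_o; first by exists y.
    by rewrite x_o eqxx in xt.
  by rewrite x_o eqxx in xs.
- by rewrite peel_mjE !ffunE; case: ifP => // _; rewrite fibre.
- by have [v <-] := surj u; exists v; rewrite ffunE.
- by rewrite (leq_trans (fibre_card_le1 _ peel_mv_inj)) ?leq_addl.
Qed.

Lemma loop_number_peel u : loop_number m u = (u == w) + loop_number peel u.
Proof.
have lcon := loop_con_lcon w; have adm_lc := admissible_lcon lcon.
have adm_peel := peel_admissible.
rewrite -{1}peel_comp loop_number_comp // (loop_number_lcon lcon) [in LHS]ffunE [mv _ (bd _)]ffunE.
by rewrite (big_pred1 u) // => v; rewrite ffunE.
Qed.

End PeelLoop.

Section VertexInjective.
Variables (X Y : agg) (m : mor X Y).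
Hypotheses (adm_m : admissible m) (inj_m : injective (mv m)).

Lemma iso_of_fixed : (forall x, mj m x = x) -> is_iso m.
Proof.
move=> fixed; split; first exact: inj_surj_bij (adm_mv_surj adm_m).
split; last by split=> //; apply: adm_compat adm_m.
apply: inj_surj_bij (adm_mf_inj adm_m) _ => x.
have /codomP [y ->] : x \in codom (mf m) by rewrite -(adm_mj_fixE adm_m) fixed.
by exists y.
Qed.

Lemma loop_number_moved s : mj m s != s -> 0 < loop_number m (mv m (bd s)).
Proof. by move=> s_moved; rewrite (loop_number_peel adm_m inj_m s_moved (erefl _)) eqxx. Qed.

Lemma moved_of_loop_number w :
  0 < loop_number m w -> exists2 s, mj m s != s & mv m (bd s) = w.
Proof.
have [v <-] := adm_mv_surj adm_m w; rewrite ffunE fibre_card_inj //.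
case: (set_0Vmem [set x | (mj m x != x) && (mv m (bd x) == mv m v)]) => [none | [x]].
  by rewrite /ghost_flags none cards0.
by rewrite inE => /andP [x_moved /eqP x_v]; exists x.
Qed.

Lemma sum_loop_number_peel s (s_moved : mj m s != s) :
  \sum_u loop_number m u = (\sum_u loop_number (peel m s (mv m (bd s))) u).+1.
Proof.
under eq_bigr => u _ do rewrite (loop_number_peel adm_m inj_m s_moved (erefl _)).
by rewrite big_split /= sum_indicator1.
Qed.

Lemma iso_of_loop_number0 : loop_number m = [ffun=> 0] -> is_iso m.
Proof.
move=> L0; apply: iso_of_fixed => x; apply/eqP/negPn/negP => /loop_number_moved.
by rewrite L0 ffunE.
Qed.

End VertexInjective.

Lemma ctd_of_vertex_inj X Y (m : mor X Y) : admissible m -> injective (mv m) -> ctd m.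
Proof.
have [n] := ubnP (\sum_u loop_number m u); elim: n X Y m => // n IH X Y m sum_lt adm_m inj_m.
case: (pickP (fun x => mj m x != x)) => [s s_moved | fixed]; last first.
  by apply/ctd_iso/iso_of_fixed => // x; apply/eqP/negbFE/fixed.
rewrite -(peel_comp (mv m (bd s)) adm_m s_moved); apply: ctd_comp_lcon (loop_con_lcon _).
apply: IH; last exact: peel_mv_inj.
  by move: sum_lt; rewrite (sum_loop_number_peel adm_m inj_m s_moved).
exact: peel_admissible.
Qed.

Definition id_obj Y : cobj Y := CObj (ctd_iso (idm_iso Y)).

Lemma cconn_iso Y X (m : mor X Y) (p : ctd m) : is_iso m -> cconn (CObj p) (id_obj Y).
Proof.
move=> iso_m; apply: rst_step; exists m; split; first exact: forest_iso.
by have [inj _ _ fixE _ _ _] := admissible_iso iso_m; apply: compm1.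
Qed.

Lemma cconn_vertex_inj Y X1 X2 (m1 : mor X1 Y) (m2 : mor X2 Y) (p1 : ctd m1) (p2 : ctd m2) :
  injective (mv m1) -> injective (mv m2) -> loop_number m1 = loop_number m2 ->
  cconn (CObj p1) (CObj p2).
Proof.
have [n] := ubnP (\sum_u loop_number m1 u).
elim: n Y X1 X2 m1 m2 p1 p2 => // n IH Y X1 X2 m1 m2 p1 p2 sum_lt inj1 inj2 L12.
have adm1 := ctd_admissible p1; have adm2 := ctd_admissible p2.
case: (pickP (fun w => 0 < loop_number m1 w)) => [w w_pos | L1_0]; last first.
  have L0 : loop_number m1 = [ffun=> 0].
    by apply/ffunP => w; rewrite ffunE; apply/eqP; rewrite -leqn0 leqNgt L1_0.
  apply: (cconn_trans (cconn_iso p1 (iso_of_loop_number0 adm1 inj1 L0))).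
  by apply/cconn_sym/cconn_iso/iso_of_loop_number0; rewrite -?L12.
have [s s_moved s_w] := moved_of_loop_number adm1 inj1 w_pos.
have [s' s'_moved s'_w] : exists2 s', mj m2 s' != s' & mv m2 (bd s') = w.
  by apply: moved_of_loop_number; rewrite -?L12.
pose peeled1 :=
  CObj (ctd_of_vertex_inj (peel_admissible adm1 inj1 s_moved s_w) (peel_mv_inj inj1)).
pose peeled2 :=
  CObj (ctd_of_vertex_inj (peel_admissible adm2 inj2 s'_moved s'_w) (peel_mv_inj inj2)).
pose post (c : cobj (loop_agg w)) := ctd_comp_lcon (cphiP c) (loop_con_lcon w).
have c1 : cconn (CObj p1) (CObj (post peeled1)) by apply: cconn_eq; rewrite /= peel_comp.
have c2 : cconn (CObj (post peeled2)) (CObj p2) by apply: cconn_eq; rewrite /= peel_comp.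
apply: (cconn_trans c1); apply: (cconn_trans _ c2); apply: cconn_post; apply: IH; last 2 first.
- exact: peel_mv_inj.
- apply/ffunP => u; apply/eqP; rewrite -(eqn_add2l (u == w)).
  rewrite -(loop_number_peel adm1 inj1 s_moved s_w).
  by rewrite -(loop_number_peel adm2 inj2 s'_moved s'_w) L12.
- by move: sum_lt; rewrite -s_w (sum_loop_number_peel adm1 inj1 s_moved).
- exact: peel_mv_inj.
Qed.

Lemma loopnum_surj Y (g : genus_val Y) : exists a : cobj Y, loopnum a = g.
Proof.
have [n] := ubnP (\sum_u g u); elim: n Y g => // n IH Y g sum_lt.
case: (pickP (fun w => 0 < g w)) => [w g_w | g0]; last first.
  exists (id_obj Y); rewrite loopnumE (loop_number_iso (idm_iso Y)); apply/ffunP => u.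
  by rewrite ffunE; apply/esym/eqP; rewrite -leqn0 leqNgt g0.
pose g' : genus_val (loop_agg w) := [ffun u => g u - (u == w)].
have g_g' u : g u = (u == w) + g' u by rewrite ffunE subnKC //; case: eqP => // ->.
have [a' La'] : exists a', loopnum a' = g'.
  by apply: IH; move: sum_lt; rewrite (eq_bigr _ (fun u _ => g_g' u)) big_split /= sum_indicator1.
have lcon := loop_con_lcon w; have adm_lc := admissible_lcon lcon.
exists (post_lcon a' lcon); rewrite loopnum_post //.
apply/ffunP => u; rewrite ffunE (loop_number_lcon lcon) ffunE [mv _ (bd _)]ffunE (g_g' u) La'.
by congr (_ + _); rewrite ffunE (big_pred1 u) // => v; rewrite ffunE.
Qed.

(* [comp phi psi] factors as the edge contraction [econ_first] of [X] followed
   by the vertex-injective [econ_rest]. *)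
Section EdgeContractionFirst.
Variables (X Y Y' : agg) (phi : mor X Y) (psi : mor Y Y') (s t : F Y).
Hypotheses (adm_phi : admissible phi) (inj_phi : injective (mv phi)) (econ : is_econ s t psi).

Let m := comp phi psi.
Let s0 := mf phi s.
Let t0 := mf phi t.
Let kept x := (x != s0) && (x != t0).

Let adm_m : admissible m.
Proof. exact: admissible_comp adm_phi (admissible_econ econ). Qed.

Let del : deletes_st s t psi.
Proof. by case: econ => _ []. Qed.

Let s0t0 : s0 != t0.
Proof. by rewrite (inj_eq (adm_mf_inj adm_phi)); case: del. Qed.

Let mj_s0 : mj m s0 = t0.
Proof. by rewrite (comp_mj_mf psi s (adm_mf_inj adm_phi)); have [_ [_ [_ [-> _]]]] := del. Qed.

Let mj_t0 : mj m t0 = s0.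
Proof. by rewrite -mj_s0 (adm_mjK adm_m). Qed.

Let kept_mj x : kept x -> kept (mj m x).
Proof.
have mjK := adm_mjK adm_m.
case/andP => xs xt; apply/andP; split.
  by apply: contra xt => /eqP mx; rewrite -(mjK x) mx mj_s0.
by apply: contra xs => /eqP mx; rewrite -(mjK x) mx mj_t0.
Qed.

Let kept_mf y : kept (mf m y).
Proof.
have [_ [_ [codomE _]]] := del; have /andP [ys yt] : (mf psi y != s) && (mf psi y != t).
  by rewrite -codomE codom_f.
by rewrite /kept /m comp_mf !(inj_eq (adm_mf_inj adm_phi)) ys yt.
Qed.

Definition contracted : agg :=
  @Agg (V Y') {x : F X | kept x} (fun x => mv m (bd (val x))).

Definition econ_first : mor X contracted :=
  @Mor X contracted [ffun v => mv m v] [ffun x => val x]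
    [ffun x => if x == s0 then t0 else if x == t0 then s0 else x].

Definition econ_rest : mor contracted Y' :=
  @Mor contracted Y' [ffun v => v] [ffun y => exist _ (mf m y) (kept_mf y)]
    [ffun x => insubd x (mj m (val x))].

Let mv_phi_bd u y : mv phi u = bd y <-> u = bd (mf phi y).
Proof. by rewrite -(adm_compat adm_phi y); split=> [/inj_phi | ->]. Qed.

Lemma econ_first_econ : is_econ s0 t0 econ_first.
Proof.
have [st_bd [_ [_ [_ merge]]]] := econ.
split; first by apply: contra st_bd => /eqP/mv_phi_bd <-; rewrite adm_compat.
split.
  split=> //; split; first by move=> x y; rewrite !ffunE; apply: val_inj.
  split.
    move=> x; apply/codomP/idP => [[y ->] | x_kept]; first by rewrite ffunE; exact: (valP y).
    by exists (exist _ x x_kept); rewrite ffunE.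
  rewrite !ffunE eqxx eq_sym (negbTE s0t0) eqxx; do 2!split=> //.
  by move=> x xs xt; rewrite ffunE (negbTE xs) (negbTE xt).
split; first by move=> x; rewrite [mv econ_first _]ffunE [mf econ_first _]ffunE.
split; first by move=> u; have [v <-] := adm_mv_surj adm_m u; exists v; rewrite ffunE.
move=> u v; rewrite ![mv econ_first _]ffunE /m !comp_mv merge !mv_phi_bd.
by split=> [[/inj_phi -> | [[-> ->] | [-> ->]]] | [-> | [[-> ->] | [-> ->]]]]; rewrite ?eqxx; auto.
Qed.

Let val_econ_rest_mj x : val (mj econ_rest x) = mj m (val x).
Proof. by rewrite ffunE insubdK //; apply/kept_mj/(valP x). Qed.

Let val_econ_rest_mf y : val (mf econ_rest y) = mf m y.
Proof. by rewrite ffunE. Qed.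

Lemma econ_first_comp : comp econ_first econ_rest = comp phi psi.
Proof.
have inj_first : injective (mf econ_first) by move=> x y; rewrite !ffunE; apply: val_inj.
apply: mor_ext => x; first by rewrite !comp_mv !ffunE.
  by rewrite comp_mf [mf econ_first _]ffunE val_econ_rest_mf.
have [x_kept | x_del] := boolP (kept x).
  have x_first : mf econ_first (exist _ x x_kept) = x by rewrite ffunE.
  by rewrite -[in LHS]x_first comp_mj_mf // [mf econ_first _]ffunE val_econ_rest_mj.
rewrite comp_mj_notin; last first.
  by apply/codomP => -[y x_y]; move: x_del; rewrite x_y ffunE (valP y).
rewrite ffunE; move: x_del; rewrite negb_and !negbK.
case: (eqVneq x s0) => [-> _ | _ /eqP ->]; first exact/esym/mj_s0.
by rewrite eqxx; apply/esym/mj_t0.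
Qed.

Lemma econ_rest_mv_inj : injective (mv econ_rest).
Proof. by move=> u v; rewrite !ffunE. Qed.

Lemma econ_rest_admissible : admissible econ_rest.
Proof.
have [inj compat_m mjK fixE fibre _ _] := adm_m.
split=> [x y | y | x | x | x | u | u].
- by move/(congr1 val); rewrite !val_econ_rest_mf => /inj.
- by rewrite [mv econ_rest _]ffunE /= val_econ_rest_mf compat_m.
- by apply: val_inj; rewrite !val_econ_rest_mj mjK.
- rewrite -(inj_eq val_inj) val_econ_rest_mj fixE.
  apply/codomP/codomP => -[y x_y]; exists y; last by rewrite x_y val_econ_rest_mf.
  by apply: val_inj; rewrite val_econ_rest_mf x_y.
- by rewrite ![mv econ_rest _]ffunE /= val_econ_rest_mj fibre.
- by exists u; rewrite ffunE.
- by rewrite (leq_trans (fibre_card_le1 _ econ_rest_mv_inj)) ?leq_addl.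
Qed.

End EdgeContractionFirst.

Lemma cconn_post_of Y Y' (psi : mor Y Y') (post : forall a : cobj Y, ctd (comp (cphi a) psi))
  X (m : mor X Y) (p : ctd m) (q : ctd (comp m psi)) (r : cobj Y) :
  cconn (CObj p) r -> cconn (CObj q) (CObj (post r)).
Proof.
by move=> pr; apply: (cconn_trans (cconn_eq q (post (CObj p)) erefl) (cconn_post post pr)).
Qed.

Lemma vertex_inj_rep X Y (m : mor X Y) : ctd m ->
  forall p : ctd m, exists2 r : cobj Y, injective (mv (cphi r)) & cconn (CObj p) r.
Proof.
elim=> {X Y m} [X Y m iso_m | X Y Z m1 m2 p1 IH iso2 | X Y Z m1 m2 s t p1 IH econ2
  | X Y Z m1 m2 s t p1 IH lcon2] p.
- by exists (CObj p); [apply: bij_inj (proj1 iso_m) | apply: rst_refl].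
- have [r1 inj_r1 c1] := IH p1; exists (CObj (ctd_comp_iso (cphiP r1) iso2)).
    exact: comp_mv_inj inj_r1 (bij_inj (proj1 iso2)).
  exact: (cconn_post_of (fun c => ctd_comp_iso (cphiP c) iso2)).
- have [r1 inj_r1 c1] := IH p1; have adm_r1 := ctd_admissible (cphiP r1).
  have inj_rest := econ_rest_mv_inj (adm_phi := adm_r1) (econ := econ2).
  exists (CObj (ctd_of_vertex_inj (econ_rest_admissible adm_r1 econ2) inj_rest)) => //.
  apply: (cconn_trans (cconn_post_of (fun c => ctd_comp_econ (cphiP c) econ2) _ c1)).
  apply: rst_step; exists (econ_first (cphi r1) m2 s t); split; last exact: econ_first_comp.
  have := forest_comp_econ (forest_iso (idm_iso _)) (econ_first_econ adm_r1 inj_r1 econ2).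
  by rewrite comp1m.
- have [r1 inj_r1 c1] := IH p1; exists (CObj (ctd_comp_lcon (cphiP r1) lcon2)).
    by have [_ [_ [_ /bij_inj inj2]]] := lcon2; apply: comp_mv_inj.
  exact: (cconn_post_of (fun c => ctd_comp_lcon (cphiP c) lcon2)).
Qed.

Lemma cconnP Y (a b : cobj Y) : cconn a b <-> loopnum a = loopnum b.
Proof.
split=> [|L]; first exact: loopnum_cconn.
move: a b L => [X m p] [X' m' p'] L.
have [[Xa ma pa] inj_a ca] := vertex_inj_rep p p.
have [[Xb mb pb] inj_b cb] := vertex_inj_rep p' p'.
apply: (cconn_trans ca); apply: (cconn_trans _ (cconn_sym cb)).
apply: cconn_vertex_inj => //; change (loopnum (CObj pa) = loopnum (CObj pb)).
by rewrite -(loopnum_cconn ca) -(loopnum_cconn cb).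
Qed.

Lemma loopnum_post_iso Y Y' (psi : mor Y Y') (h : is_iso psi) (a : cobj Y) :
  loopnum (post_iso a h) = gsum psi (loopnum a).
Proof.
rewrite loopnum_post ?(loop_number_iso h); last exact: admissible_iso.
by apply/ffunP => w; rewrite !ffunE.
Qed.

Lemma loopnum_post_econ Y Y' (psi : mor Y Y') s t (h : is_econ s t psi) (a : cobj Y) :
  loopnum (post_econ a h) = gsum psi (loopnum a).
Proof.
rewrite loopnum_post ?(loop_number_econ h); last exact: admissible_econ h.
by apply/ffunP => w; rewrite !ffunE.
Qed.

Lemma loopnum_post_lcon Y Y' (psi : mor Y Y') s t (h : is_lcon s t psi) (a : cobj Y) :
  loopnum (post_lcon a h) = gloop psi s (loopnum a).
Proof.
rewrite loopnum_post ?(loop_number_lcon h); last exact: admissible_lcon h.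
by apply/ffunP => w; rewrite !ffunE addnC.
Qed.

Theorem proposition5p4 :
  (forall (Y : agg) (a b : cobj Y), cconn a b <-> loopnum a = loopnum b) /\
  (forall (Y : agg) (g : genus_val Y), exists a : cobj Y, loopnum a = g) /\
  (forall (Y Y' : agg) (psi : mor Y Y') (h : is_iso psi) (a : cobj Y),
      loopnum (post_iso a h) = gsum psi (loopnum a)) /\
  (forall (Y Y' : agg) (psi : mor Y Y') (s t : F Y) (h : is_econ s t psi) (a : cobj Y),
      loopnum (post_econ a h) = gsum psi (loopnum a)) /\
  (forall (Y Y' : agg) (psi : mor Y Y') (s t : F Y) (h : is_lcon s t psi) (a : cobj Y),
      loopnum (post_lcon a h) = gloop psi s (loopnum a)).
Proof.
split; first exact: cconnP.
split; first exact: loopnum_surj.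
split; first exact: loopnum_post_iso.
split; first exact: loopnum_post_econ.
exact: loopnum_post_lcon.
Qed.
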